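(* Let $q=3^\alpha$ where $\alpha\geq 3$ is odd. Then there exists a finite group $H$ such that $O_3(H)\neq 1$ and $\mu(H)=\{6,9,q-1,(q+1)/2\}$.
   Context: For a finite group $X$, $\omega(X)$ is the set of orders of elements of $X$, and $\mu(X)$ is the set of elements of $\omega(X)$ maximal with respect to divisibility. $O_3(X)$ is the largest normal $3$-subgroup of $X$. *)

From mathcomp Require Import all_boot all_fingroup all_solvable.
Set Implicit Arguments. Unset Strict Implicit. Unset Printing Implicit Defensive.
Local Open Scope group_scope.

Definition in_omega (gT : finGroupType) (X : {set gT}) (n : nat) : Prop :=
  exists2 x, x \in X & #[x] = n.

Definition in_mu (gT : finGroupType) (X : {set gT}) (n : nat) : Prop :=
  in_omega X n /\ (forall m, in_omega X m -> (n %| m)%N -> m = n).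

From mathcomp Require Import all_boot all_order all_algebra all_fingroup all_solvable all_field.
From mathcomp Require Import ring zify.
Set Implicit Arguments. Unset Strict Implicit. Unset Printing Implicit Defensive.
Import GRing.Theory.

(* Take for H the affine permutations X |-> e A X (A^s)^T + V of the space of
   2x2 matrices over F_(q^2), where e = +-1, A ranges over SL_2(q) and A^s is A
   with every entry cubed.  The translations form a normal 3-subgroup, so
   O_3(H) <> 1.  Let T be the linear part and t the trace of A.  If t^2 = 1 then
   A^3 = -t, so T^3 = e, and as tripling kills the translation part in
   characteristic 3 the order divides 9 (e = 1) or 6 (e = -1).  If t = 0 then
   A^2 = -1, T^2 = 1 and the order divides 6.  Otherwise A has eigenvalues
   mu <> mu^-1 in F_(q^2) with mu^(q-1) = 1 or mu^(q+1) = 1, so A^L is a scalar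
   +-1 for L = q - 1 or (q + 1)/2, and T^L = 1 as L is even.  The eigenvalues of
   T are the products mu_i mu_j^3 and q = 3 (mod 8) forces mu^8 <> 1, so T has
   no fixed point and the translation part cannot raise the order above L.
   Explicit elements attain 6, 9, q - 1 and (q + 1)/2, and none of these four
   numbers divides another. *)

Lemma in_mu_antichain (gT : finGroupType) (X : {set gT}) (s : seq nat) :
  {in s &, forall a b, (a %| b)%N -> a = b} ->
  (forall x, x \in X -> exists2 L, L \in s & (#[x]%g %| L)%N) ->
  (forall L, L \in s -> exists2 x, x \in X & (L %| #[x]%g)%N) ->
  forall n, in_mu X n <-> n \in s.
Proof.
move=> s_anti bound witness.
have s_omega L : L \in s -> in_omega X L.
  move=> sL; have [x Xx L_dvd] := witness L sL; have [L' sL' x_dvd] := bound x Xx.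
  have eqL : L = L' := s_anti _ _ sL sL' (dvdn_trans L_dvd x_dvd).
  by exists x => //; apply/eqP; rewrite eqn_dvd L_dvd eqL x_dvd.
move=> n; split=> [[[x Xx <-] x_max] | sn].
  by have [L sL x_dvd] := bound x Xx; rewrite -(x_max L (s_omega L sL) x_dvd).
split=> [|_ [x Xx <-] n_dvd]; first exact: s_omega.
have [L sL x_dvd] := bound x Xx; have eqn := s_anti _ _ sn sL (dvdn_trans n_dvd x_dvd).
by apply/eqP; rewrite eqn_dvd n_dvd eqn x_dvd.
Qed.

Local Open Scope ring_scope.

Section PermOf.
Variable T : finType.

Definition perm_of (f : T -> T) : {perm T} :=
  if injectiveP f is ReflectT f_inj then perm f_inj else 1%g.

Lemma perm_ofE f : injective f -> perm_of f =1 f.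
Proof.
by rewrite /perm_of => f_inj x; case: injectiveP => // f_inj'; rewrite permE.
Qed.

Lemma order_perm_of_dvdn f n : injective f ->
  (#[perm_of f]%g %| n)%N = [forall x, iter n f x == x].
Proof.
move=> f_inj; rewrite order_dvdn; apply/eqP/forallP => [fn1 x | fn_id].
  by rewrite -(eq_iter (perm_ofE f_inj)) -permX fn1 perm1.
by apply/permP => x; rewrite permX (eq_iter (perm_ofE f_inj)) perm1; apply/eqP.
Qed.

End PermOf.

Section AffineIterates.
Variables (V : zmodType) (T : V -> V) (v : V).
Hypothesis T_additive : {morph T : x y / x + y}.
Local Notation f := (fun X => T X + v).

Lemma iter_affine n X : iter n f X = iter n T X + iter n f 0.
Proof.
elim: n => [|n IHn] /=; first by rewrite addr0.
by rewrite IHn T_additive addrA.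
Qed.

Lemma iter_affineD m n : iter (m + n) f 0 = iter m T (iter n f 0) + iter m f 0.
Proof. by rewrite iterD iter_affine. Qed.

Lemma affine_period_char3 k : (forall X : V, X *+ 3 = 0) ->
  (forall X, iter k T X = X) -> forall X, iter (3 * k) f X = X.
Proof.
move=> char3 Tk X; have iter3 g (Y : V) : iter (3 * k) g Y = iter k g (iter k g (iter k g Y)).
  by rewrite mulSn mul2n -addnn !iterD.
rewrite iter_affine iter3 !Tk mulSn mul2n -addnn !iter_affineD !Tk.
by rewrite -mulr2n -mulrSr char3 addr0.
Qed.

Lemma affine_periodN k :
  (forall X, iter k T X = - X) -> forall X, iter (2 * k) f X = X.
Proof.
move=> Tk X; have Tkk Y : iter (k + k) T Y = Y by rewrite iterD !Tk opprK.
by rewrite mul2n -addnn iter_affine iter_affineD Tk Tkk addNr addr0.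
Qed.

Lemma affine_period_fixfree k : (forall X, T X = X -> X = 0) ->
  (forall X, iter k T X = X) -> forall X, iter k f X = X.
Proof.
move=> fixfree Tk X; rewrite iter_affine Tk -[RHS]addr0; congr (_ + _).
have T0 : T 0 = 0 by apply: (addrI (T 0)); rewrite -T_additive !addr0.
(* Computing f^(k+1) 0 in two ways shows that f^k 0 is fixed by T. *)
have := iter_affineD 1 k; rewrite addnC iter_affineD /= Tk T0 !add0r addrC.
by move/addIr/esym; apply: fixfree.
Qed.

End AffineIterates.

Lemma dvdn9_eq d : (d %| 9)%N -> ~~ (d %| 3)%N -> d = 9%N.
Proof.
by move=> d_dvd; have := dvdn_leq (isT : 0 < 9)%N d_dvd; move: d d_dvd; do 10!case=> //.
Qed.

Lemma dvdn6_eq d : (d %| 6)%N -> ~~ (d %| 2)%N -> ~~ (d %| 3)%N -> d = 6%N.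
Proof.
by move=> d_dvd; have := dvdn_leq (isT : 0 < 6)%N d_dvd; move: d d_dvd; do 7!case=> //.
Qed.

Lemma coprime_double_add4 m : odd m -> coprime (2 * m) (m + 4).
Proof.
move=> m_odd; rewrite coprimeMl coprime2n oddD m_odd /=.
by rewrite /coprime gcdnDl -/(coprime m 4) (_ : 4 = 2 ^ 2)%N // coprimeXr // coprimen2.
Qed.

Section Matrix2.
Variable R : comNzRingType.
Implicit Types A B : 'M[R]_2.

Lemma sum_ord2 (V : nmodType) (F : 'I_2 -> V) : \sum_(i < 2) F i = F 0 + F 1.
Proof. by rewrite big_ord_recl big_ord1; congr (F _ + F _); apply/val_inj. Qed.

Lemma ord2P (i : 'I_2) : i = 0 \/ i = 1.
Proof. by case: i => [[|[|i]]] // lt_i2; [left | right]; apply/val_inj. Qed.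

Lemma matrix2P A B :
  A 0 0 = B 0 0 -> A 0 1 = B 0 1 -> A 1 0 = B 1 0 -> A 1 1 = B 1 1 -> A = B.
Proof.
move=> eq00 eq01 eq10 eq11; apply/matrixP => i j.
by case: (ord2P i) => ->; case: (ord2P j) => ->.
Qed.

Lemma mul_mx2E A B i j : (A * B) i j = A i 0 * B 0 j + A i 1 * B 1 j.
Proof. by rewrite -mulmxE mxE sum_ord2. Qed.

Lemma det_mx2 A : \det A = A 0 0 * A 1 1 - A 0 1 * A 1 0.
Proof.
have lift_0 : lift 0 0 = 1 :> 'I_2 by apply/val_inj.
have lift_1 : lift 1 0 = 0 :> 'I_2 by apply/val_inj.
rewrite (expand_det_row _ 0) sum_ord2 /cofactor !det_mx11 !mxE lift_0 lift_1.
by rewrite expr0 expr1 mul1r mulN1r mulrN.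
Qed.

Lemma trace_mx2 A : \tr A = A 0 0 + A 1 1.
Proof. exact: sum_ord2. Qed.

Lemma Cayley_Hamilton_mx2 A : A * A = \tr A *: A - (\det A)%:M.
Proof. by apply: matrix2P; rewrite !mul_mx2E !mxE det_mx2 trace_mx2 /=; ring. Qed.

Lemma sqr_mx2_tr0 A : \det A = 1 -> \tr A = 0 -> A ^+ 2 = (- 1)%:M.
Proof.
by move=> det1 tr0; rewrite expr2 Cayley_Hamilton_mx2 det1 tr0 scale0r sub0r raddfN.
Qed.

Lemma cube_mx2_sqr_tr1 A : \det A = 1 -> \tr A ^+ 2 = 1 -> A ^+ 3 = (- \tr A)%:M.
Proof.
move=> det1 tr2_1; rewrite exprS expr2 Cayley_Hamilton_mx2 det1 mulrBr mulr1.
rewrite -scalerAr Cayley_Hamilton_mx2 det1 scalerBr scalerA -expr2 tr2_1 scale1r.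
by rewrite addrAC subrr add0r -scaleNr scalemx1.
Qed.

End Matrix2.

Section QuadraticSpectral.
Variables (F : fieldType) (B : algType F) (A : B) (mu mu' : F).
Hypothesis A_quadratic : A * A = (mu + mu') *: A - (mu * mu') *: 1.
Hypothesis mu_neq : mu != mu'.

Definition eproj := (mu - mu')^-1 *: (A - mu' *: 1).
Definition eproj' := 1 - eproj.

Lemma eproj_add : eproj + eproj' = 1.
Proof. by rewrite addrC subrK. Qed.

Lemma eprojC : eproj * A = A * eproj.
Proof. by rewrite -scalerAl -scalerAr mulrBl mulrBr -scalerAl -scalerAr mul1r mulr1. Qed.

Lemma eproj'C : eproj' * A = A * eproj'.
Proof. by rewrite mulrBl mulrBr mul1r mulr1 eprojC. Qed.

Lemma mul_eproj : A * eproj = mu *: eproj.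
Proof.
have A_root : A * (A - mu' *: 1) = mu *: (A - mu' *: 1).
  rewrite mulrBr -scalerAr mulr1 A_quadratic scalerDl scalerBr scalerA.
  by rewrite addrAC addrK.
by rewrite -scalerAr A_root !scalerA mulrC.
Qed.

Lemma mul_eproj' : A * eproj' = mu' *: eproj'.
Proof.
have A_split : A - mu' *: 1 = (mu - mu') *: eproj.
  by rewrite scalerA mulfV ?subr_eq0 // scale1r.
rewrite mulrBr mulr1 mul_eproj scalerBr -[in LHS](subrK (mu' *: 1) A) A_split.
by rewrite scalerBl addrAC [_ - _ - _]addrAC subrr add0r addrC.
Qed.

Lemma expr_spectral n : A ^+ n = mu ^+ n *: eproj + mu' ^+ n *: eproj'.
Proof.
elim: n => [|n IHn]; first by rewrite !expr0 !scale1r eproj_add.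
rewrite exprS IHn mulrDr -(scalerAr _ A eproj) -(scalerAr _ A eproj').
by rewrite mul_eproj mul_eproj' !scalerA -!exprSr.
Qed.

End QuadraticSpectral.

Lemma expr_spectral_mx2_lower_left (F : fieldType) (A : 'M[F]_2) (mu mu' : F) n :
  A * A = (mu + mu') *: A - (mu * mu') *: 1 -> mu != mu' ->
  (A ^+ n) 1 0 = (mu ^+ n - mu' ^+ n) / (mu - mu') * A 1 0.
Proof.
move=> A_quadratic mu_neq; rewrite (expr_spectral A_quadratic mu_neq) /eproj' /eproj !mxE /=.
by rewrite !mulr0 !subr0 sub0r; field; rewrite subr_eq0.
Qed.

Lemma sandwich_eigen_eq0 (F : fieldType) (B : algType F) (A C X Y Z : B) (a c e : F) :
  X * A = a *: X -> C * Z = c *: Z -> A * Y * C = e *: Y -> a * c != e ->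
  X * Y * Z = 0.
Proof.
move=> XA CZ AYC ac_neq.
have : (a * c) *: (X * Y * Z) = e *: (X * Y * Z).
  transitivity (X * (A * Y * C) * Z); last by rewrite AYC -scalerAr -scalerAl.
  rewrite !mulrA XA -!scalerAl -[X * Y * C * Z]mulrA CZ -scalerAr.
  by rewrite scalerA.
move/eqP; rewrite -subr_eq0 -scalerBl scaler_eq0 subr_eq0 (negPf ac_neq).
by move/eqP.
Qed.

Section FrobeniusTwist.
Variables (E : fieldType) (n : nat).
Hypothesis ch3 : 3 \in [pchar E].
Local Notation M := 'M[E]_n.+1.
Implicit Types (A B X Y : M) (a e : E).

Definition frobT A : M := (map_mx (pFrobenius_aut ch3) A)^T.

Lemma frobTM A B : frobT (A * B) = frobT B * frobT A.
Proof. by rewrite /frobT -!mulmxE map_mxM trmx_mul. Qed.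

Lemma frobT1 : frobT 1 = 1.
Proof. by rewrite /frobT map_mx1 trmx1. Qed.

Lemma frobTD A B : frobT (A + B) = frobT A + frobT B.
Proof. by rewrite /frobT map_mxD linearD. Qed.

Lemma frobTZ a A : frobT (a *: A) = a ^+ 3 *: frobT A.
Proof. by rewrite /frobT map_mxZ linearZ. Qed.

Lemma frobT_scalar a : frobT a%:M = (a ^+ 3)%:M.
Proof. by rewrite -[a%:M]scalemx1 frobTZ frobT1 scalemx1. Qed.

Lemma frobT_unit A : A \is a GRing.unit -> frobT A \is a GRing.unit.
Proof. by rewrite /frobT -![_ \is a _]/(_ \in unitmx) unitmx_tr map_unitmx. Qed.

Definition twist e A X := e *: (A * X * frobT A).

Lemma twistD e A X Y : twist e A (X + Y) = twist e A X + twist e A Y.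
Proof. by rewrite /twist mulrDr mulrDl scalerDr. Qed.

Lemma twistZ e A a X : twist e A (a *: X) = a *: twist e A X.
Proof. by rewrite /twist -scalerAr -scalerAl !scalerA mulrC. Qed.

Lemma iter_twist_eigen e A a X k :
  twist e A X = a *: X -> iter k (twist e A) X = a ^+ k *: X.
Proof.
move=> TX; elim: k => [|k IHk]; first by rewrite scale1r.
by rewrite iterS IHk twistZ TX scalerA -exprSr.
Qed.

Lemma twist0 e A : twist e A 0 = 0.
Proof. by rewrite /twist mulr0 mul0r scaler0. Qed.

Lemma twist_comp e e' A A' X : twist e A (twist e' A' X) = twist (e * e') (A * A') X.
Proof.
rewrite /twist -scalerAr -scalerAl scalerA frobTM; congr (_ *: _).
by rewrite !mulrA.
Qed.

Lemma twist1 X : twist 1 1 X = X.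
Proof. by rewrite /twist frobT1 mul1r mulr1 scale1r. Qed.

Lemma iter_twist e A k X : iter k (twist e A) X = twist (e ^+ k) (A ^+ k) X.
Proof.
elim: k => [|k IHk]; first by rewrite !expr0 twist1.
by rewrite iterS IHk twist_comp -!exprS.
Qed.

Lemma twist_scalar e a X : twist e a%:M X = (e * a ^+ 4) *: X.
Proof.
rewrite /twist frobT_scalar -!mulmxE mul_scalar_mx mul_mx_scalar !scalerA.
by rewrite -mulrA -exprSr mulrC.
Qed.

Lemma twist_inj e A : e != 0 -> A \is a GRing.unit -> injective (twist e A).
Proof.
move=> e_neq0 A_unit X Y /(scalerI e_neq0) /(mulIr (frobT_unit A_unit)).
exact: mulrI.
Qed.

End FrobeniusTwist.

Section FrobeniusTwist2.
Variable E : fieldType.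
Hypothesis ch3 : 3 \in [pchar E].
Local Notation twist := (twist ch3).
Implicit Types (A B X : 'M[E]_2) (e : E).

Lemma natr_neq0 n : ~~ (3 %| n)%N -> n%:R != 0 :> E.
Proof. by rewrite (dvdn_pcharf ch3). Qed.

Lemma twist_deltaE e A i j k l :
  twist e A (delta_mx i j) k l = e * (A k i * A l j ^+ 3).
Proof.
rewrite mxE !mul_mx2E !mxE /=.
by case: (ord2P i) => ->; case: (ord2P j) => ->; rewrite /= !pFrobenius_autE; ring.
Qed.

Lemma twist_id_lower_left e B : (forall X, twist e B X = X) -> B 1 0 = 0.
Proof.
move=> B_id; have /matrixP T00 := B_id (delta_mx 0 0).
have := T00 0 0; have := T00 1 0; rewrite !twist_deltaE !mxE /= mulr1n mulr0n.
move=> T10 T00'.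
have -> : B 1 0 = e * (B 1 0 * B 0 0 ^+ 3) * B 0 0.
  by rewrite -[LHS]mulr1 -T00'; ring.
by rewrite T10 mul0r.
Qed.

End FrobeniusTwist2.

Lemma finField_prim_root (F : finFieldType) : exists g : F, #|F|.-1.-primitive_root g.
Proof.
have card_gt1 := @finNzRing_gt1 F.
have n_gt0 : (0 < #|F|.-1)%N by rewrite -ltnS prednK // ltnW.
have roots : all #|F|.-1.-unity_root (enum [pred x : F | x != 0]).
  apply/allP => x; rewrite mem_enum unity_rootE => x_neq0; apply/eqP/(mulfI x_neq0).
  by rewrite -exprS prednK ?expf_card ?mulr1 // ltnW.
have card_roots : (#|F|.-1 <= size (enum [pred x : F | x != 0%R]))%N.
  by rewrite -cardE cardC1.
by have [g _ ?] := hasP (has_prim_root n_gt0 roots (enum_uniq _) card_roots); exists g.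
Qed.

Section AffineGroup.
Variables (E : finFieldType) (alpha : nat).
Hypothesis ch3 : 3 \in [pchar E].
Hypotheses (alpha_odd : odd alpha) (alpha_ge3 : (3 <= alpha)%N).
Local Notation q := (3 ^ alpha)%N.
Hypothesis card_E : #|E| = (q ^ 2)%N.
Local Notation M := 'M[E]_2.
Local Notation frobT := (frobT ch3).
Local Notation twist := (twist ch3).
Implicit Types (A B X Y v : M) (a e t x y : E) (b : bool).

Lemma q_mod24 : (q %% 24 = 3)%N.
Proof.
have [k ->] : exists k, alpha = (2 * k).+1.
  by exists alpha./2; rewrite -[in LHS](odd_double_half alpha) alpha_odd -muln2 mulnC.
elim: k => // k IHk.
rewrite (_ : (2 * k.+1).+1 = (2 * k).+1 + 2)%N; last lia.
by rewrite expnD -modnMml IHk.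
Qed.

Lemma q_ge27 : (27 <= q)%N.
Proof. by rewrite -[27%N]/(3 ^ 3)%N leq_exp2l. Qed.

Lemma q_decomp : exists2 j, q = (24 * j + 3)%N & (0 < j)%N.
Proof.
exists (q %/ 24)%N; first by rewrite {1}(divn_eq q 24) q_mod24 mulnC.
by have := q_ge27; rewrite {1}(divn_eq q 24) q_mod24; lia.
Qed.

Lemma q_pred_gt0 : (0 < q.-1)%N.
Proof. by have [j -> _] := q_decomp; lia. Qed.

Lemma q_pchar : [pchar E].-nat q.
Proof. by rewrite (eq_pnat _ (pcharf_eq ch3)) pnatX pnat_id. Qed.

Lemma q_odd : odd q.
Proof. by rewrite oddX orbT. Qed.

Lemma exprqD x y : (x + y) ^+ q = x ^+ q + y ^+ q.
Proof. exact: exprDn_pchar q_pchar. Qed.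

Lemma exprqN x : (- x) ^+ q = - x ^+ q.
Proof. by rewrite -mulN1r exprMn -signr_odd q_odd mulN1r. Qed.

Lemma Fq_expr_pred x : x != 0 -> x ^+ q = x -> x ^+ q.-1 = 1.
Proof.
by move=> x_neq0 xq; apply: (mulIf x_neq0); rewrite mul1r -exprSr prednK ?expn_gt0.
Qed.

Definition SL2q A :=
  (\det A == 1) && [forall i, forall j, A i j ^+ q == A i j].

Lemma SL2qP A :
  reflect (\det A = 1 /\ forall i j, A i j ^+ q = A i j) (SL2q A).
Proof.
apply: (iffP andP) => [[/eqP det1 /forallP Fq] | [det1 Fq]].
  by split=> // i j; apply/eqP/(forallP (Fq i)).
by split; [apply/eqP | apply/forallP => i; apply/forallP => j; apply/eqP].
Qed.

Lemma SL2q_unit A : SL2q A -> A \is a GRing.unit.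
Proof. by case/SL2qP => det1 _; rewrite unitmxE det1 unitr1. Qed.

Lemma SL2q_trace A : SL2q A -> \tr A ^+ q = \tr A.
Proof. by case/SL2qP => _ Fq; rewrite trace_mx2 exprqD !Fq. Qed.

Lemma SL2q1 : SL2q 1.
Proof.
apply/SL2qP; split=> [|i j]; first exact: det1.
by rewrite mxE; case: (i == j); rewrite ?expr1n ?expr0n ?gtn_eqF ?expn_gt0.
Qed.

Lemma SL2qM A B : SL2q A -> SL2q B -> SL2q (A * B).
Proof.
move=> /SL2qP[detA FqA] /SL2qP[detB FqB]; apply/SL2qP; split.
  by rewrite -mulmxE det_mulmx detA detB mulr1.
by move=> i j; rewrite mul_mx2E exprqD !exprMn !FqA !FqB.
Qed.

Local Notation aff_map b A v := (fun X => twist ((-1) ^+ b) A X + v).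

Definition aff b A v : {perm M} := perm_of (aff_map b A v).

Lemma aff_map_inj b A v : A \is a GRing.unit -> injective (aff_map b A v).
Proof. by move=> A_unit X Y /addIr; apply: twist_inj; rewrite ?signr_eq0. Qed.

Lemma affE b A v X : A \is a GRing.unit -> aff b A v X = twist ((-1) ^+ b) A X + v.
Proof. by move/(aff_map_inj (b := b) (v := v))/perm_ofE. Qed.

Lemma aff_transl v X : aff false 1 v X = X + v.
Proof. by rewrite affE ?unitr1 // twist1. Qed.

Lemma affM b b' A A' v v' : SL2q A -> SL2q A' ->
  (aff b A v * aff b' A' v')%g = aff (b' (+) b) (A' * A) (twist ((-1) ^+ b') A' v + v').
Proof.
move=> /SL2q_unit A_unit /SL2q_unit A'_unit; apply/permP => X.
by rewrite permM !affE ?unitrMl // twistD twist_comp signr_addb addrA.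
Qed.

Definition Haff_set : {set {perm M}} :=
  [set p | [exists b, exists A, exists v, SL2q A && (p == aff b A v)]].

Lemma HaffP p : reflect (exists b A v, SL2q A /\ p = aff b A v) (p \in Haff_set).
Proof.
rewrite inE; apply: (iffP existsP) => [[b /existsP[A /existsP[v /andP[SL_A /eqP ->]]]] | ].
  by exists b, A, v.
case=> b [A [v [SL_A ->]]]; exists b; apply/existsP; exists A; apply/existsP; exists v.
by rewrite SL_A /=.
Qed.

Lemma Haff_group_set : group_set Haff_set.
Proof.
apply/group_setP; split.
  apply/HaffP; exists false, 1, 0; split; first exact: SL2q1.
  by apply/permP => X; rewrite aff_transl perm1 addr0.
move=> _ _ /HaffP[b [A [v [SL_A ->]]]] /HaffP[b' [A' [v' [SL_A' ->]]]].
rewrite affM //; apply/HaffP; exists (b' (+) b), (A' * A).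
by eexists; split; first exact: SL2qM.
Qed.

Definition Haff := Group Haff_group_set.

Definition translations : {set {perm M}} := [set aff false 1 v | v : M].

Lemma translations_group_set : group_set translations.
Proof.
apply/group_setP; split.
  by apply/imsetP; exists 0 => //; apply/permP => X; rewrite aff_transl addr0 perm1.
move=> _ _ /imsetP[v _ ->] /imsetP[v' _ ->]; apply/imsetP; exists (v + v') => //.
by apply/permP => X; rewrite permM !aff_transl addrA.
Qed.

Definition Ntransl := Group translations_group_set.

Lemma card_translations : #|Ntransl| = (#|E| ^ 4)%N.
Proof.
rewrite card_imset ?card_mx // => v v' /permP /(_ 0).
by rewrite !aff_transl !add0r.
Qed.

Lemma translations_normal : (Ntransl <| Haff)%g.
Proof.
apply/andP; split.
  apply/subsetP => _ /imsetP[v _ ->]; apply/HaffP.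
  by exists false, 1, v; split; first exact: SL2q1.
apply/subsetP => _ /HaffP[b [A [v [/SL2q_unit A_unit ->]]]]; rewrite inE.
apply/subsetP => _ /imsetP[_ /imsetP[u _ ->] ->].
apply/imsetP; exists (twist ((-1) ^+ b) A u) => //; apply/permP => X.
rewrite !permM !aff_transl -[in RHS](permKV (aff b A v) X).
by rewrite !affE // twistD addrAC.
Qed.

Lemma pcore3_Haff_neq1 : ('O_3(Haff) != 1)%g.
Proof.
have N3 : (3.-group Ntransl)%g by rewrite /pgroup card_translations card_E !pnatX pnat_id.
apply/trivgPn; exists (aff false 1 (delta_mx 0 0)).
  by apply: (subsetP (pcore_max N3 translations_normal)); apply/imsetP; exists (delta_mx 0 0).
apply/eqP => /permP /(_ 0) /matrixP /(_ 0 0).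
by rewrite aff_transl perm1 !mxE add0r => /eqP; rewrite oner_eq0.
Qed.

Lemma order_aff_dvdn b A v n : SL2q A ->
  (#[aff b A v]%g %| n)%N = [forall X, iter n (aff_map b A v) X == X].
Proof. by move/SL2q_unit/(aff_map_inj (b := b) (v := v))/order_perm_of_dvdn. Qed.

Lemma aff_order_dvdn b A v n : SL2q A ->
  (forall X, iter n (aff_map b A v) X = X) -> (#[aff b A v]%g %| n)%N.
Proof.
by move=> SL_A period; rewrite order_aff_dvdn //; apply/forallP => X; rewrite period.
Qed.

Lemma aff0_period b A n X : SL2q A ->
  (#[aff b A 0]%g %| n)%N -> iter n (twist ((-1) ^+ b) A) X = X.
Proof.
move=> SL_A; rewrite order_aff_dvdn // => /forallP /(_ X) /eqP {2}<-.
by apply: eq_iter => Y; rewrite addr0.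
Qed.

Lemma mx_char3 X : X *+ 3 = 0.
Proof. by rewrite -scaler_nat (pcharf0 ch3) scale0r. Qed.

Lemma order_aff_sqr_tr1 b A v : SL2q A -> \tr A ^+ 2 = 1 ->
  (#[aff b A v]%g %| if b then 6 else 9)%N.
Proof.
move=> SL_A tr2_1; have /SL2qP[det1 _] := SL_A.
have T3 X : iter 3 (twist ((-1) ^+ b) A) X = (-1) ^+ b *: X.
  rewrite iter_twist cube_mx2_sqr_tr1 // twist_scalar exprS sqrr_sign mulr1.
  by rewrite -[4%N]/(2 * 2)%N exprM sqrrN tr2_1 expr1n mulr1.
case: b T3 => T3; apply: aff_order_dvdn => //.
  by apply: (affine_periodN _ (twistD ch3 _ _) (k := 3)) => X; rewrite T3 scaleN1r.
by apply: (affine_period_char3 _ (twistD ch3 _ _) (k := 3) mx_char3) => X; rewrite T3 scale1r.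
Qed.

Lemma order_aff_tr0 b A v : SL2q A -> \tr A = 0 -> (#[aff b A v]%g %| 6)%N.
Proof.
move=> SL_A tr0; have /SL2qP[det1 _] := SL_A.
apply: aff_order_dvdn => //; apply: (affine_period_char3 _ (twistD ch3 _ _) (k := 2) mx_char3).
move=> X; rewrite iter_twist sqr_mx2_tr0 // twist_scalar sqrr_sign mul1r.
by rewrite -signr_odd /= expr0 scale1r.
Qed.

Lemma card_E_pred : #|E|.-1 = (q.-1 * q.+1)%N.
Proof. by rewrite card_E; have := q_ge27; nia. Qed.

Definition unipotent : M := 1 + delta_mx 0 1.

Lemma unipotentE :
  [/\ unipotent 0 0 = 1, unipotent 0 1 = 1, unipotent 1 0 = 0 & unipotent 1 1 = 1].
Proof. by rewrite !mxE /= ?addr0 ?add0r. Qed.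

Lemma unipotent_SL2q : SL2q unipotent.
Proof.
have [U00 U01 U10 U11] := unipotentE; apply/SL2qP; split.
  by rewrite det_mx2 U00 U01 U10 U11 mulr1 mulr0 subr0.
move=> i j; case: (ord2P i) => ->; case: (ord2P j) => ->;
  by rewrite ?U00 ?U01 ?U10 ?U11 ?expr1n ?expr0n ?gtn_eqF ?expn_gt0.
Qed.

Lemma sqr_tr_unipotent : \tr unipotent ^+ 2 = 1.
Proof.
have [U00 _ _ U11] := unipotentE; rewrite trace_mx2 U00 U11.
by rewrite -[1 + 1]/(2%:R) -natrX (_ : 2 ^ 2 = 3 + 1)%N // natrD (pcharf0 ch3) add0r.
Qed.

Definition elt9 := aff false unipotent (delta_mx 1 1).

Lemma order_elt9 : #[elt9]%g = 9%N.
Proof.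
have [U00 U01 U10 U11] := unipotentE.
apply: dvdn9_eq; first exact: (order_aff_sqr_tr1 _ _ unipotent_SL2q sqr_tr_unipotent).
rewrite order_aff_dvdn ?unipotent_SL2q //.
apply/negP => /forallP /(_ 0) /eqP /matrixP /(_ 0 0).
have addE (B C : M) i j : (B + C) i j = B i j + C i j by rewrite mxE.
rewrite /= !twistD !twist_comp twist0 !addE !twist_deltaE !mul_mx2E U00 U01 U11 !mxE /=.
by apply/eqP; rewrite (_ : _ + _ = 17%:R) ?(natr_neq0 ch3) //; ring.
Qed.

Definition elt6 := aff true unipotent 0.

Lemma order_elt6 : #[elt6]%g = 6%N.
Proof.
have [U00 U01 U10 U11] := unipotentE.
apply: dvdn6_eq; first exact: (order_aff_sqr_tr1 _ _ unipotent_SL2q sqr_tr_unipotent).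
  apply/negP => /(aff0_period (delta_mx 1 1) unipotent_SL2q) /matrixP /(_ 0 0).
  rewrite /= twist_comp twist_deltaE !mul_mx2E U00 U01 U11 !mxE /=.
  by apply/eqP; rewrite (_ : _ * _ = 16%:R) ?(natr_neq0 ch3) //; ring.
apply/negP => /(aff0_period (delta_mx 0 0) unipotent_SL2q) /matrixP /(_ 0 0).
rewrite /= !twist_comp twist_deltaE !mul_mx2E U00 U01 U10 U11 !mxE /=.
by apply/eqP; rewrite -subr_eq0 (_ : _ - _ = - 2%:R) ?oppr_eq0 ?(natr_neq0 ch3) //; ring.
Qed.

Local Notation mu_list := [:: 6; 9; q.-1; q.+1 %/ 2]%N.

Lemma mu_list_antichain : {in mu_list &, forall m n, (m %| n)%N -> m = n}.
Proof.
have [j -> j_gt0] := q_decomp; move=> m n; rewrite !inE.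
by move=> /or4P[]/eqP-> /or4P[]/eqP-> /dvdnP[k]; case: k => [|[|k]]; nia.
Qed.

Section PrimitiveRoot.
Variable g : E.
Hypothesis g_prim : #|E|.-1.-primitive_root g.

Local Notation lam := (g ^+ q.+1).
Local Notation zeta := (g ^+ q.-1).

Lemma lam_prim : q.-1.-primitive_root lam.
Proof.
by rewrite -[q.+1](mulKn _ q_pred_gt0) -card_E_pred dvdn_prim_root // card_E_pred dvdn_mulr.
Qed.

Lemma zeta_prim : q.+1.-primitive_root zeta.
Proof.
by rewrite -[q.-1](mulnK _ (ltn0Sn q)) -card_E_pred dvdn_prim_root // card_E_pred dvdn_mull.
Qed.

Lemma Fq_square x : x ^+ q = x -> exists s, s ^+ 2 = x.
Proof.
have [-> _ | x_neq0 xq] := eqVneq x 0; first by exists 0; rewrite expr0n.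
have [[i _] /= ->] := prim_rootP lam_prim (Fq_expr_pred x_neq0 xq).
exists (g ^+ (q.+1 %/ 2) ^+ i); rewrite -!exprM mulnCA divnK; first by rewrite mulnC.
by rewrite dvdn2 /= q_odd.
Qed.

Lemma exists_eigenvalue t : t ^+ q = t -> exists mu, mu * (t - mu) = 1.
Proof.
move=> tq; have [s s2] : exists s, s ^+ 2 = t ^+ 2 - 1.
  by apply: Fq_square; rewrite exprqD exprqN expr1n exprAC tq.
(* In characteristic 3 this is the root (t + s) / 2 of X^2 - t X + 1. *)
exists (- (t + s)); have three0 : 3%:R = 0 :> E := pcharf0 ch3.
have -> : - (t + s) * (t - - (t + s)) = 1 - 3%:R * (t ^+ 2 + t * s) + (t ^+ 2 - 1 - s ^+ 2).
  by ring.
by rewrite three0 mul0r subr0 s2 subrr addr0.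
Qed.

Section SemisimpleCase.
Variables (A : M) (mu : E).
Hypotheses (SL_A : SL2q A) (tr_neq0 : \tr A != 0) (tr2_neq1 : \tr A ^+ 2 != 1).
Hypothesis mu_eigen : mu * (\tr A - mu) = 1.
Local Notation mu' := (\tr A - mu).

Lemma eigen_add : mu + mu' = \tr A.
Proof. by rewrite addrC subrK. Qed.

Lemma eigen_neq0 : mu != 0.
Proof. by apply: contra_eq_neq mu_eigen => ->; rewrite mul0r eq_sym oner_neq0. Qed.

Lemma eigen_neq : mu != mu'.
Proof.
apply: contra_neq tr2_neq1 => eq_mu; rewrite -eigen_add -eq_mu.
have -> : (mu + mu) ^+ 2 = 4%:R * (mu * mu) by ring.
by rewrite {2}eq_mu mu_eigen mulr1 (_ : 4 = 3 + 1)%N // natrD (pcharf0 ch3) add0r.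
Qed.

Lemma A_quadratic : A * A = (mu + mu') *: A - (mu * mu') *: 1.
Proof.
have /SL2qP[det1 _] := SL_A.
by rewrite Cayley_Hamilton_mx2 eigen_add mu_eigen det1 scalemx1.
Qed.

Lemma eigen_frobq : mu ^+ q = mu \/ mu ^+ q = mu'.
Proof.
have root_q : mu ^+ q * (\tr A - mu ^+ q) = 1.
  by rewrite -(SL2q_trace SL_A) -exprqN -exprqD -exprMn mu_eigen expr1n.
have : (mu ^+ q - mu) * (mu ^+ q - mu') = mu * mu' - mu ^+ q * (\tr A - mu ^+ q).
  by ring.
rewrite mu_eigen root_q subrr => /eqP; rewrite mulf_eq0 !subr_eq0.
by case/orP => /eqP; [left | right].
Qed.

Lemma eigen_sqr_neq1 : mu ^+ 2 != 1.
Proof.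
apply: contra_neq eigen_neq => mu2; apply: (mulfI eigen_neq0).
by rewrite mu_eigen -expr2 mu2.
Qed.

Lemma eigen_pow8_neq1 : mu ^+ 8 != 1.
Proof.
apply/eqP => mu8; have [j q_eq24 _] := q_decomp.
have mu4 : mu ^+ 4 = 1.
  have pow8 k r : mu ^+ (8 * k + r) = mu ^+ r by rewrite exprD exprM mu8 expr1n mul1r.
  case: eigen_frobq => muq.
    have := Fq_expr_pred eigen_neq0 muq.
    rewrite (_ : q.-1 = 8 * (3 * j) + 2)%N; last by rewrite q_eq24; lia.
    by rewrite pow8 => mu2; rewrite (_ : 4 = 2 * 2)%N // exprM mu2 expr1n.
  have : mu ^+ q.+1 = 1 by rewrite exprS muq mu_eigen.
  by rewrite (_ : q.+1 = 8 * (3 * j) + 4)%N ?pow8 // q_eq24; lia.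
have : (mu ^+ 2 - 1) * (mu ^+ 2 + 1) = 0.
  by rewrite -subr_sqr -exprM mu4 expr1n subrr.
move/eqP; rewrite mulf_eq0 subr_eq0 (negPf eigen_sqr_neq1) addr_eq0 /= => /eqP mu2.
have mu'_eq : mu' = - mu by apply: (mulfI eigen_neq0); rewrite mu_eigen mulrN -expr2 mu2 opprK.
by move: tr_neq0; rewrite -eigen_add mu'_eq subrr eqxx.
Qed.

Lemma semisimple_scalar_power :
  exists2 L, L \in [:: q.-1; q.+1 %/ 2]%N & exists2 c, c ^+ 2 = 1 & A ^+ L = c%:M.
Proof.
have A_pow L c : mu ^+ L = c -> mu' ^+ L = c -> A ^+ L = c%:M.
  move=> muL mu'L; rewrite (expr_spectral A_quadratic eigen_neq) muL mu'L.
  by rewrite -scalerDr eproj_add scalemx1.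
have mu'_pow L c : mu ^+ L = c -> c ^+ 2 = 1 -> mu' ^+ L = c.
  move=> muL c2; have c_neq0 : c != 0 by rewrite -muL expf_neq0 ?eigen_neq0.
  by apply: (mulfI c_neq0); rewrite -{1}muL -exprMn mu_eigen expr1n -expr2 c2.
case: eigen_frobq => muq.
  have mu_pred := Fq_expr_pred eigen_neq0 muq.
  exists q.-1; first by rewrite mem_head.
  by exists 1; rewrite ?expr1n //; apply: A_pow => //; apply: mu'_pow; rewrite ?expr1n.
have c2 : (mu ^+ (q.+1 %/ 2)) ^+ 2 = 1.
  by rewrite -exprM divnK ?dvdn2 /= ?q_odd // exprS muq mu_eigen.
exists (q.+1 %/ 2)%N; first by rewrite !inE eqxx orbT.
by exists (mu ^+ (q.+1 %/ 2)) => //; apply: A_pow => //; apply: mu'_pow.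
Qed.

Lemma twist_fixfree e X : e ^+ 2 = 1 -> twist e A X = X -> X = 0.
Proof.
move=> e2 fixX; have AXA : A * X * frobT A = e *: X.
  by rewrite -[LHS]scale1r -e2 expr2 -scalerA; congr (e *: _).
pose P := eproj A mu mu'; pose Q := eproj' A mu mu'.
have PA : P * A = mu *: P by rewrite eprojC mul_eproj // A_quadratic.
have QA : Q * A = mu' *: Q by rewrite eproj'C mul_eproj' ?A_quadratic ?eigen_neq.
have RP : frobT A * frobT P = mu ^+ 3 *: frobT P by rewrite -frobTM PA frobTZ.
have RQ : frobT A * frobT Q = mu' ^+ 3 *: frobT Q by rewrite -frobTM QA frobTZ.
have sqr_neq x : x ^+ 4 != 1 -> x ^+ 2 != e.
  by apply: contra_neq => x2; rewrite (_ : 4 = 2 * 2)%N // exprM x2.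
have mu8 := eigen_pow8_neq1; have mu4 : mu ^+ 4 != 1.
  by apply: contra_neq mu8; rewrite (_ : 8 = 4 * 2)%N // exprM => ->; rewrite expr1n.
have mu'_pow k : mu ^+ k != 1 -> mu' ^+ k != 1.
  by apply: contra_neq => mu'k; rewrite -[LHS]mulr1 -mu'k -exprMn mu_eigen expr1n.
(* Each block of X cut out by the eigenprojections of A on both sides is an
   eigenvector of Y |-> A Y frobT A for an eigenvalue mu_i mu_j^3 <> e. *)
have X_split : (P + Q) * X * (frobT P + frobT Q) = X.
  by rewrite -frobTD /P /Q eproj_add frobT1 mul1r mulr1.
clearbody P Q; rewrite -X_split !(mulrDl, mulrDr).
rewrite (sandwich_eigen_eq0 PA RP AXA) ?(sandwich_eigen_eq0 PA RQ AXA).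
rewrite ?(sandwich_eigen_eq0 QA RP AXA) ?(sandwich_eigen_eq0 QA RQ AXA) ?addr0 //.
- by rewrite -exprS -[4%N]/(2 * 2)%N exprM sqr_neq // -exprM mu'_pow.
- by rewrite exprS mulrA [mu' * mu]mulrC mu_eigen mul1r sqr_neq.
- by rewrite exprS mulrA mu_eigen mul1r sqr_neq ?mu'_pow.
- by rewrite -exprS -[4%N]/(2 * 2)%N exprM sqr_neq // -exprM.
Qed.

End SemisimpleCase.

Lemma order_aff_semisimple b A v : SL2q A -> \tr A != 0 -> \tr A ^+ 2 != 1 ->
  exists2 L, L \in [:: q.-1; q.+1 %/ 2]%N & (#[aff b A v]%g %| L)%N.
Proof.
move=> SL_A tr_neq0 tr2_neq1; have [mu mu_eigen] := exists_eigenvalue (SL2q_trace SL_A).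
have [L L_in [c c2 AL]] := semisimple_scalar_power SL_A tr2_neq1 mu_eigen.
exists L => //; apply: aff_order_dvdn => //.
have /dvdnP[k L_eq] : (2 %| L)%N.
  by move: L_in; have [j -> _] := q_decomp; rewrite !inE => /orP[] /eqP ->; lia.
apply: (affine_period_fixfree _ (twistD ch3 _ _)) => X.
  by apply: (twist_fixfree SL_A tr_neq0 tr2_neq1 mu_eigen); rewrite sqrr_sign.
rewrite iter_twist AL twist_scalar L_eq mulnC exprM sqrr_sign expr1n mul1r.
by rewrite -[4%N]/(2 * 2)%N exprM c2 expr1n scale1r.
Qed.

Definition split_torus : M := lam *: delta_mx 0 0 + lam^-1 *: delta_mx 1 1.

Lemma split_torusE i j : split_torus i j = (i == j)%:R * (if i == 0 then lam else lam^-1).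
Proof.
rewrite !mxE; case: (ord2P i) => ->; case: (ord2P j) => ->;
  by rewrite /= ?mulr1 ?mulr0 ?addr0 ?add0r ?mul1r ?mul0r.
Qed.

Lemma lam_neq0 : lam != 0.
Proof. by rewrite (prim_root_eq0 lam_prim) -lt0n q_pred_gt0. Qed.

Lemma lam_q : lam ^+ q = lam.
Proof.
by rewrite -[X in _ ^+ X = _](@prednK q) ?expn_gt0 // exprSr (prim_expr_order lam_prim) mul1r.
Qed.

Lemma split_torus_SL2q : SL2q split_torus.
Proof.
apply/SL2qP; split=> [|i j]; rewrite ?det_mx2 !split_torusE /=.
  by rewrite !mul1r !mul0r subr0 mulfV ?lam_neq0.
case: (ord2P i) => ->; case: (ord2P j) => ->;
  by rewrite /= ?mul1r ?mul0r ?exprVn ?lam_q ?expr0n ?gtn_eqF ?expn_gt0.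
Qed.

Definition elt_split := aff true split_torus 0.

Lemma dvdn_order_elt_split : (q.-1 %| #[elt_split]%g)%N.
Proof.
set o := #[elt_split]%g.
have T00 : twist (-1) split_torus (delta_mx 0 0) = (- lam ^+ 4) *: delta_mx 0 0.
  apply/matrixP => i j; rewrite twist_deltaE !split_torusE !mxE.
  by case: (ord2P i) => ->; case: (ord2P j) => ->; rewrite /=; ring.
have := aff0_period (delta_mx 0 0) split_torus_SL2q (dvdnn o).
rewrite (iter_twist_eigen _ T00) => /matrixP /(_ 0 0); rewrite !mxE /= mulr1.
have [m q_pred_eq m_odd] : exists2 m, q.-1 = (2 * m)%N & odd m.
  have [j -> _] := q_decomp; exists (12 * j).+1; first lia.
  by rewrite /= oddM.
have lam_m : lam ^+ m = -1.
  have : (lam ^+ m) ^+ 2 == 1 by rewrite -exprM mulnC -q_pred_eq prim_expr_order ?lam_prim.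
  rewrite sqrf_eq1 => /orP[/eqP lam_m1 | /eqP //].
  have : (q.-1 %| m)%N by rewrite (prim_order_dvd lam_prim) lam_m1.
  move/dvdn_leq; rewrite q_pred_eq.
  by case: m m_odd {q_pred_eq lam_m1} => //= m _ /(_ isT); lia.
rewrite -mulN1r -lam_m -exprD -exprM => /eqP; rewrite -(prim_order_dvd lam_prim).
by rewrite q_pred_eq Gauss_dvdr // coprime_double_add4.
Qed.

Lemma zeta_neq0 : zeta != 0.
Proof. by rewrite (prim_root_eq0 zeta_prim). Qed.

Lemma zeta_q : zeta ^+ q = zeta^-1.
Proof.
by apply: (mulfI zeta_neq0); rewrite -exprS (prim_expr_order zeta_prim) mulfV ?zeta_neq0.
Qed.

Lemma zeta_neq_inv : zeta != zeta^-1.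
Proof.
apply/eqP => zeta_inv.
have : (q.+1 %| 2)%N by rewrite (prim_order_dvd zeta_prim) expr2 {2}zeta_inv mulfV ?zeta_neq0.
by move/dvdn_leq => /(_ isT); have [j -> _] := q_decomp; lia.
Qed.

Definition nonsplit_torus : M :=
  delta_mx 1 0 - delta_mx 0 1 + (zeta + zeta^-1) *: delta_mx 1 1.

Lemma nonsplit_torusE : [/\ nonsplit_torus 0 0 = 0, nonsplit_torus 0 1 = -1,
  nonsplit_torus 1 0 = 1 & nonsplit_torus 1 1 = zeta + zeta^-1].
Proof. by rewrite !mxE /=; split; ring. Qed.

Lemma nonsplit_torus_SL2q : SL2q nonsplit_torus.
Proof.
have [C00 C01 C10 C11] := nonsplit_torusE; apply/SL2qP; split.
  by rewrite det_mx2 C00 C01 C10 C11 mul0r sub0r mulN1r opprK.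
move=> i j; case: (ord2P i) => ->; case: (ord2P j) => ->;
  rewrite ?C00 ?C01 ?C10 ?C11 ?expr0n ?gtn_eqF ?expn_gt0 ?exprqN ?expr1n //.
by rewrite exprqD zeta_q exprVn zeta_q invrK addrC.
Qed.

Definition elt_nonsplit := aff false nonsplit_torus 0.

Lemma dvdn_order_elt_nonsplit : (q.+1 %/ 2 %| #[elt_nonsplit]%g)%N.
Proof.
set o := #[elt_nonsplit]%g; have [C00 C01 C10 C11] := nonsplit_torusE.
have /SL2qP[det1 _] := nonsplit_torus_SL2q.
have Co10 : (nonsplit_torus ^+ o) 1 0 = 0.
  apply: (twist_id_lower_left (e := 1)) => X; rewrite -(expr1n _ o) -iter_twist.
  exact: aff0_period nonsplit_torus_SL2q (dvdnn o).
have quad : nonsplit_torus * nonsplit_torus =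
    (zeta + zeta^-1) *: nonsplit_torus - (zeta * zeta^-1) *: 1.
  by rewrite Cayley_Hamilton_mx2 trace_mx2 C00 C11 add0r det1 mulfV ?zeta_neq0 ?scale1r.
move: Co10; rewrite (expr_spectral_mx2_lower_left _ quad zeta_neq_inv) C10 mulr1 => /eqP.
rewrite mulf_eq0 invr_eq0 !subr_eq0 (negPf zeta_neq_inv) orbF => /eqP zeta_o.
have : (zeta ^+ (o * 2) == 1).
  by rewrite exprM expr2 {2}zeta_o -exprMn mulfV ?zeta_neq0 ?expr1n.
rewrite -(prim_order_dvd zeta_prim) -{1}(divnK (_ : 2 %| q.+1)%N) ?dvdn_pmul2r //.
by rewrite dvdn2 /= q_odd.
Qed.

Lemma order_Haff_bound (p : {perm M}) :
  p \in Haff -> exists2 L, L \in mu_list & (#[p]%g %| L)%N.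
Proof.
case/HaffP=> b [A [v [SL_A ->]]].
have [tr2_1 | tr2_neq1] := eqVneq (\tr A ^+ 2) 1.
  by exists (if b then 6 else 9)%N; [case: b | exact: order_aff_sqr_tr1].
have [tr0 | tr_neq0] := eqVneq (\tr A) 0; first by exists 6%N; last exact: order_aff_tr0.
have [L L_in L_dvd] := order_aff_semisimple b v SL_A tr_neq0 tr2_neq1.
by exists L => //; move: L_in; rewrite !inE => /orP[] ->; rewrite ?orbT.
Qed.

Lemma Haff_mu n : in_mu Haff n <-> n \in mu_list.
Proof.
apply: in_mu_antichain mu_list_antichain order_Haff_bound _ n => L.
rewrite !inE => /or4P[]/eqP->.
- exists elt6; last by rewrite order_elt6.
  by apply/HaffP; exists true, unipotent, 0; split; first exact: unipotent_SL2q.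
- exists elt9; last by rewrite order_elt9.
  by apply/HaffP; exists false, unipotent, (delta_mx 1 1); split; first exact: unipotent_SL2q.
- exists elt_split; last exact: dvdn_order_elt_split.
  by apply/HaffP; exists true, split_torus, 0; split; first exact: split_torus_SL2q.
- exists elt_nonsplit; last exact: dvdn_order_elt_nonsplit.
  by apply/HaffP; exists false, nonsplit_torus, 0; split; first exact: nonsplit_torus_SL2q.
Qed.

End PrimitiveRoot.

End AffineGroup.

Local Close Scope ring_scope.
Local Open Scope group_scope.

Theorem lemma3p2 (alpha : nat) (Hodd : odd alpha) (H3 : (3 <= alpha)%N) :
  let q := (3 ^ alpha)%N in
  exists (gT : finGroupType) (H : {group gT}),
    'O_3(H) != 1 /\
    (forall n, in_mu H n <-> n \in [:: 6; 9; q.-1; q.+1 %/ 2]%N).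
Proof.
move=> q; have alpha2_gt0 : (0 < alpha * 2)%N by rewrite muln_gt0 (leq_trans _ H3).
have [E ch3 card_E] := pPrimePowerField (isT : prime 3) alpha2_gt0.
rewrite expnM in card_E; have [g g_prim] := finField_prim_root E.
exists _, (Haff alpha ch3); split; first exact: pcore3_Haff_neq1.
exact: Haff_mu g_prim.
Qed.
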